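(* Let $X$ be a countably infinite set and $W=\{0,1\}^X$. The Sum Preorder $\succeq_{SP}$ is the largest relation in the set of preorders on $W$ satisfying Strong Pareto and Permutation Invariance. That is, $\succeq_{SP}$ is a preorder on $W$ satisfying both axioms, and for every preorder $\succeq$ on $W$ satisfying both axioms and all $w,v\in W$, $w\succeq v$ implies $w\succeq_{SP} v$.
   Context: Worlds are functions $w:X\to\mathbb R$. For a preorder $\succeq$, $w\succ v$ means $w\succeq v$ and not $v\succeq w$. For a permutation $\pi$ of $X$, $\pi(w)(x)=w(\pi(x))$. Strong Pareto: for all $w,v\in W$, if $w(x)\ge v(x)$ for all $x$ and $w(x)>v(x)$ for some $x$, then $w\succ v$. Permutation Invariance: for all $w,v\in W$ and every permutation $\pi$ of $X$, $w\succeq v$ iff $\pi(w)\succeq\pi(v)$. A series $\sum_{x\in X}a_x$ converges unconditionally (diverges unconditionally to $+\infty$) if it converges to the same value (diverges to $+\infty$) under every enumeration of $X$. Sum Preorder: $w\succeq_{SP} v$ iff $\sum_{x\in X}(w(x)-v(x))$ converges unconditionally to some $r\ge 0$ or diverges unconditionally to $+\infty$. A relation $\succeq$ weakly extends $\succeq'$ if $w\succeq' v$ implies $w\succeq v$; a relation is the largest in a set $\mathcal R$ of relations if it belongs to $\mathcal R$ and weakly extends every member of $\mathcal R$. *)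

From Stdlib Require Import Reals.
Open Scope R_scope.

Definition bij {A B : Type} (f : A -> B) : Prop :=
  exists g : B -> A, (forall a, g (f a) = a) /\ (forall b, f (g b) = b).

Definition countably_infinite (X : Type) : Prop :=
  exists e : nat -> X, bij e.

Definition enumeration {X : Type} (e : nat -> X) : Prop := bij e.
Definition permutation {X : Type} (p : X -> X) : Prop := bij p.

Definition inW {X : Type} (w : X -> R) : Prop := forall x, w x = 0 \/ w x = 1.

Definition permw {X : Type} (p : X -> X) (w : X -> R) : X -> R := fun x => w (p x).

Definition psum {X : Type} (a : X -> R) (e : nat -> X) : nat -> R :=
  fun n => sum_f_R0 (fun k => a (e k)) n.

Definition uncond_conv_to {X : Type} (a : X -> R) (r : R) : Prop :=
  forall e : nat -> X, enumeration e -> Un_cv (psum a e) r.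

Definition uncond_div_pinfty {X : Type} (a : X -> R) : Prop :=
  forall e : nat -> X, enumeration e -> cv_infty (psum a e).

Definition sum_preorder {X : Type} (w v : X -> R) : Prop :=
  (exists r, 0 <= r /\ uncond_conv_to (fun x => w x - v x) r)
  \/ uncond_div_pinfty (fun x => w x - v x).

(* Relations on worlds; all properties below are relativized to W. *)
Definition rel (X : Type) := (X -> R) -> (X -> R) -> Prop.

Definition strict {X : Type} (ge : rel X) : rel X :=
  fun w v => ge w v /\ ~ ge v w.

Definition preorder_on_W {X : Type} (ge : rel X) : Prop :=
  (forall w, inW w -> ge w w) /\
  (forall u v w, inW u -> inW v -> inW w -> ge u v -> ge v w -> ge u w).

Definition strong_pareto {X : Type} (ge : rel X) : Prop :=
  forall w v, inW w -> inW v ->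
    (forall x, w x >= v x) -> (exists x, w x > v x) -> strict ge w v.

Definition permutation_invariance {X : Type} (ge : rel X) : Prop :=
  forall w v, inW w -> inW v -> forall p : X -> X, permutation p ->
    (ge w v <-> ge (permw p w) (permw p v)).

(* Write w - v = 1_A - 1_B with A = {v < w} and B = {w < v}.  The sum preorder holds as
   soon as B is finite and |B| <= |A|, since a finitely supported sum does not depend on the
   enumeration; this gives reflexivity and strong Pareto, while transitivity and permutation
   invariance are inherited from sums of sequences and from reindexing.
   Conversely, if it fails, then B is infinite or |A| < |B|, and in both cases A can be
   injected into B so as to miss some b in B.  Swapping A with its image gives a permutation p
   such that v Pareto-dominates p(w) and p(v) Pareto-dominates w, both strictly at b.  For a
   preorder satisfying the axioms, w >= v then yields p(w) >= p(v) >= w >= v, contradicting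
   v > p(w). *)

From Stdlib Require Import Reals Lra Lia Classical ClassicalEpsilon FunctionalExtensionality.
Open Scope R_scope.

Definition ind (P : Prop) : R := if excluded_middle_informative P then 1 else 0.

Lemma ind_false (P : Prop) : ~ P -> ind P = 0.
Proof. unfold ind; destruct excluded_middle_informative; tauto. Qed.

Fixpoint sum_below (f : nat -> R) (n : nat) : R :=
  match n with O => 0 | S n => sum_below f n + f n end.

Lemma sum_below_ext f g n :
  (forall k, (k < n)%nat -> f k = g k) -> sum_below f n = sum_below g n.
Proof.
  induction n as [|n IH]; simpl; intros H; [reflexivity|].
  rewrite IH by (intros; apply H; lia). rewrite H by lia. reflexivity.
Qed.

Lemma sum_below_zero f n : (forall k, (k < n)%nat -> f k = 0) -> sum_below f n = 0.
Proof.
  intros H. rewrite (sum_below_ext f (fun _ => 0)) by exact H. clear H.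
  induction n as [|n IH]; simpl; lra.
Qed.

Lemma sum_below_single f n j :
  (j < n)%nat -> (forall k, k <> j -> f k = 0) -> sum_below f n = f j.
Proof.
  induction n as [|n IH]; intros Hj H; simpl; [lia|].
  destruct (Nat.eq_dec j n) as [->|Hne].
  - rewrite sum_below_zero by (intros k Hk; apply H; lia). lra.
  - rewrite IH, (H n) by (lia || auto). lra.
Qed.

Lemma sum_below_plus f g n :
  sum_below (fun k => f k + g k) n = sum_below f n + sum_below g n.
Proof. induction n; simpl; lra. Qed.

Lemma sum_below_minus f g n :
  sum_below (fun k => f k - g k) n = sum_below f n - sum_below g n.
Proof. induction n; simpl; lra. Qed.

Lemma sum_below_exchange (h : nat -> nat -> R) m n :
  sum_below (fun k => sum_below (fun j => h j k) m) n
  = sum_below (fun j => sum_below (fun k => h j k) n) m.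
Proof.
  induction n as [|n IH]; simpl.
  - symmetry; apply sum_below_zero; reflexivity.
  - rewrite IH, <- sum_below_plus. reflexivity.
Qed.

Lemma sum_below_nonpos f n : (forall k, f k <= 0) -> sum_below f n <= 0.
Proof. intros H; induction n; simpl; [lra|]. specialize (H n); lra. Qed.

Lemma sum_below_le_term f n j :
  (forall k, f k <= 0) -> (j < n)%nat -> sum_below f n <= f j.
Proof.
  intros H; induction n as [|n IH]; intros Hj; simpl; [lia|].
  destruct (Nat.eq_dec j n) as [->|Hne].
  - pose proof (sum_below_nonpos f n H); lra.
  - specialize (H n); specialize (IH ltac:(lia)); lra.
Qed.

Lemma psum_sum_below {X : Type} (a : X -> R) e n :
  psum a e n = sum_below (fun k => a (e k)) (S n).
Proof.
  unfold psum. induction n as [|n IH]; simpl; [ring|].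
  rewrite IH. reflexivity.
Qed.

Fixpoint count_below (P : nat -> Prop) (n : nat) : nat :=
  match n with
  | O => O
  | S n => (count_below P n + if excluded_middle_informative (P n) then 1 else 0)%nat
  end.

Definition finitely_often (P : nat -> Prop) : Prop :=
  exists M, forall k, (M <= k)%nat -> ~ P k.

Lemma count_below_mono P n m : (n <= m)%nat -> (count_below P n <= count_below P m)%nat.
Proof.
  induction 1; simpl; [lia|]. destruct excluded_middle_informative; lia.
Qed.

Lemma count_below_empty P n : (forall k, ~ P k) -> count_below P n = 0%nat.
Proof.
  intros H; induction n as [|n IH]; simpl; [reflexivity|].
  destruct excluded_middle_informative as [Pn|_]; [destruct (H n Pn)|lia].
Qed.

Lemma sum_below_ind P n : sum_below (fun k => ind (P k)) n = INR (count_below P n).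
Proof.
  induction n as [|n IH]; simpl; [reflexivity|].
  rewrite plus_INR, IH. unfold ind. destruct excluded_middle_informative; simpl; lra.
Qed.

Lemma count_below_attains P j :
  (exists N, (j < count_below P N)%nat) -> exists m, P m /\ count_below P m = j.
Proof.
  intros [N HN]. induction N as [|N IH]; simpl in HN; [lia|].
  destruct (Compare_dec.lt_dec j (count_below P N)) as [H|H]; [auto|].
  destruct excluded_middle_informative as [HP|HP]; [|lia]. exists N; split; [exact HP|lia].
Qed.

Lemma count_below_inj P m m' : P m -> P m' -> count_below P m = count_below P m' -> m = m'.
Proof.
  intros Pm Pm' E.
  assert (step : forall i j, P i -> (i < j)%nat -> (count_below P i < count_below P j)%nat).
  { intros i j Pi Hij. apply (Nat.lt_le_trans _ (count_below P (S i))).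
    - simpl. destruct excluded_middle_informative; [lia|contradiction].
    - apply count_below_mono; lia. }
  destruct (Nat.lt_trichotomy m m') as [L|[L|L]]; auto.
  - specialize (step m m' Pm L); lia.
  - specialize (step m' m Pm' L); lia.
Qed.

Lemma finitely_often_count_bounded P :
  finitely_often P -> exists K, forall n, (count_below P n <= K)%nat.
Proof.
  intros [M HM]. exists (count_below P M). intros n.
  induction n as [|n IH]; [apply count_below_mono; lia|].
  destruct (Compare_dec.le_lt_dec M n) as [Hn|Hn].
  - simpl. destruct excluded_middle_informative as [Pn|_]; [destruct (HM n Hn Pn)|lia].
  - apply count_below_mono; lia.
Qed.

Lemma not_finitely_often_count_unbounded P :
  ~ finitely_often P -> forall j, exists N, (j <= count_below P N)%nat.
Proof.
  intros Hinf.
  assert (Hfreq : forall M, exists k, (M <= k)%nat /\ P k).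
  { intros M. apply NNPP; intros C. apply Hinf. exists M. intros k Hk Pk. apply C; eauto. }
  induction j as [|j [N HN]]; [exists 0%nat; lia|].
  destruct (Hfreq N) as [k [Hk Pk]]. exists (S k). simpl.
  destruct excluded_middle_informative; [|contradiction].
  pose proof (count_below_mono P N k Hk); lia.
Qed.

Lemma count_bounded_finitely_often P K :
  (forall n, (count_below P n <= K)%nat) -> finitely_often P.
Proof.
  intros HK. apply NNPP; intros Hinf.
  destruct (not_finitely_often_count_unbounded P Hinf (S K)) as [N HN].
  specialize (HK N); lia.
Qed.

Lemma count_below_cv_infty P :
  ~ finitely_often P -> cv_infty (fun n => INR (count_below P n)).
Proof.
  intros Hinf M. destruct (INR_archimed 1 M) as [j Hj]; [lra|].
  destruct (not_finitely_often_count_unbounded P Hinf j) as [N HN].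
  exists N. intros n Hn. apply le_INR in HN.
  pose proof (le_INR _ _ (count_below_mono P N n Hn)). lra.
Qed.

Lemma cv_infty_plus_cv a b l : Un_cv a l -> cv_infty b -> cv_infty (fun n => a n + b n).
Proof.
  intros Ha Hb M. destruct (Ha 1 Rlt_0_1) as [N1 HN1]. destruct (Hb (M - l + 1)) as [N2 HN2].
  exists (Nat.max N1 N2). intros n Hn.
  specialize (HN1 n ltac:(lia)); specialize (HN2 n ltac:(lia)).
  unfold Rdist in HN1; apply Rabs_def2 in HN1. lra.
Qed.

Lemma cv_infty_plus a b : cv_infty a -> cv_infty b -> cv_infty (fun n => a n + b n).
Proof.
  intros Ha Hb M. destruct (Ha 0) as [N1 HN1]. destruct (Hb M) as [N2 HN2].
  exists (Nat.max N1 N2). intros n Hn.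
  specialize (HN1 n ltac:(lia)); specialize (HN2 n ltac:(lia)). lra.
Qed.

Lemma initial_segment_image_bounded (h : nat -> nat) M :
  exists B, forall m, (m < M)%nat -> (h m < B)%nat.
Proof.
  induction M as [|M [B HB]]; [exists 0%nat; lia|].
  exists (Nat.max B (S (h M))). intros m Hm.
  destruct (Nat.eq_dec m M) as [->|Hne]; [lia|]. specialize (HB m ltac:(lia)); lia.
Qed.

Section Enumerations.

Variable X : Type.

Lemma bij_compose (p : X -> X) (e : nat -> X) : bij p -> bij e -> bij (fun n => p (e n)).
Proof.
  intros [q [Hq1 Hq2]] [g [Hg1 Hg2]]. exists (fun x => g (q x)).
  split; intros; [rewrite Hq1, Hg1 | rewrite Hg2, Hq2]; reflexivity.
Qed.

Lemma finitely_often_transfer (A : X -> Prop) (e e' : nat -> X) :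
  bij e -> bij e' -> finitely_often (fun k => A (e k)) -> finitely_often (fun k => A (e' k)).
Proof.
  intros [g [Hg1 Hg2]] [g' [Hg1' _]] [M HM].
  destruct (initial_segment_image_bounded (fun m => g' (e m)) M) as [B HB].
  exists B. intros k Hk Ak.
  destruct (Compare_dec.le_lt_dec M (g (e' k))) as [Hm|Hm].
  - apply (HM _ Hm). rewrite Hg2. exact Ak.
  - specialize (HB _ Hm). simpl in HB. rewrite Hg2, Hg1' in HB. lia.
Qed.

(* A finitely supported sum can be reordered as soon as the new enumeration has covered the
   support: both sides equal the double sum of [f (e m)] over the pairs with [e m = e' k]. *)
Lemma sum_below_reindex (f : X -> R) (e e' : nat -> X) M n :
  bij e -> bij e' ->
  (forall k, (M <= k)%nat -> f (e k) = 0) ->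
  (forall m, (m < M)%nat -> exists k, (k < n)%nat /\ e' k = e m) ->
  sum_below (fun k => f (e' k)) n = sum_below (fun m => f (e m)) M.
Proof.
  intros [g [Hg1 Hg2]] [g' [Hg1' _]] Hsupp Hcov.
  set (h := fun m k => if excluded_middle_informative (e m = e' k) then f (e m) else 0).
  assert (Hh : forall m k, e m <> e' k -> h m k = 0).
  { intros m k Hne. unfold h. destruct excluded_middle_informative; tauto. }
  assert (Hcol : forall k, f (e' k) = sum_below (fun m => h m k) M).
  { intros k. destruct (Compare_dec.le_lt_dec M (g (e' k))) as [Hl|Hl].
    - rewrite sum_below_zero; [rewrite <- (Hg2 (e' k)); apply Hsupp, Hl|].
      intros m Hm. apply Hh. intros E. rewrite <- E, Hg1 in Hl. lia.
    - rewrite (sum_below_single _ M (g (e' k)) Hl).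
      + unfold h. rewrite Hg2. destruct excluded_middle_informative; congruence.
      + intros m Hm. apply Hh. intros E. apply Hm. rewrite <- E, Hg1. reflexivity. }
  rewrite (sum_below_ext _ (fun k => sum_below (fun m => h m k) M)) by (intros; apply Hcol).
  rewrite sum_below_exchange. apply sum_below_ext. intros m Hm.
  destruct (Hcov m Hm) as [k [Hk Ek]].
  rewrite (sum_below_single _ n k Hk).
  - unfold h. destruct excluded_middle_informative; congruence.
  - intros k' Hk'. apply Hh. intros E. apply Hk'.
    rewrite <- (Hg1' k), <- (Hg1' k'). congruence.
Qed.

Definition uncond_sum_nonneg (d : X -> R) : Prop :=
  (exists r, 0 <= r /\ uncond_conv_to d r) \/ uncond_div_pinfty d.

Lemma uncond_conv_finite_support (d : X -> R) (e0 : nat -> X) M :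
  bij e0 -> (forall k, (M <= k)%nat -> d (e0 k) = 0) ->
  uncond_conv_to d (sum_below (fun k => d (e0 k)) M).
Proof.
  intros He0 Hsupp e He. pose proof He as [g [_ Hg]].
  destruct (initial_segment_image_bounded (fun m => g (e0 m)) M) as [N HN].
  intros eps Heps. exists N. intros n Hn.
  rewrite psum_sum_below, (sum_below_reindex d e0 e M (S n) He0 He Hsupp).
  - unfold Rdist. rewrite Rminus_diag, Rabs_R0. lra.
  - intros m Hm. exists (g (e0 m)). split; [specialize (HN m Hm); simpl in HN; lia|apply Hg].
Qed.

Definition count_dominates (a b : nat -> Prop) : Prop :=
  exists K, (forall N, (count_below b N <= K)%nat) /\ exists N, (K <= count_below a N)%nat.

Lemma uncond_sum_nonneg_indicator_diff (A B : X -> Prop) (e0 : nat -> X) :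
  bij e0 -> count_dominates (fun k => A (e0 k)) (fun k => B (e0 k)) ->
  uncond_sum_nonneg (fun x => ind (A x) - ind (B x)).
Proof.
  intros He0 [K [HB [N0 HA]]].
  assert (finB : finitely_often (fun k => B (e0 k))) by exact (count_bounded_finitely_often _ K HB).
  destruct (classic (finitely_often (fun k => A (e0 k)))) as [[MA finA]|infA].
  - left. destruct finB as [MB finB]. set (M := Nat.max (Nat.max MA MB) N0).
    exists (sum_below (fun k => ind (A (e0 k)) - ind (B (e0 k))) M). split.
    + rewrite sum_below_minus, !sum_below_ind.
      pose proof (count_below_mono (fun k => A (e0 k)) N0 M ltac:(unfold M; lia)) as HAM.
      assert (Hcmp : (count_below (fun k => B (e0 k)) M <= count_below (fun k => A (e0 k)) M)%nat)
        by (specialize (HB M); lia).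
      apply le_INR in Hcmp. lra.
    + apply (uncond_conv_finite_support (fun x => ind (A x) - ind (B x)) e0 M He0). intros k Hk.
      rewrite ind_false, ind_false by (apply finA || apply finB; unfold M in Hk; lia). ring.
  - right. intros e He.
    destruct (finitely_often_count_bounded _ (finitely_often_transfer B e0 e He0 He finB))
      as [KB HKB].
    assert (infA' : ~ finitely_often (fun k => A (e k)))
      by (intros C; exact (infA (finitely_often_transfer A e e0 He He0 C))).
    intros M. destruct (count_below_cv_infty _ infA' (M + INR KB)) as [N HN].
    exists N. intros n Hn.
    rewrite psum_sum_below, sum_below_minus, !sum_below_ind.
    specialize (HN (S n) ltac:(lia)). pose proof (le_INR _ _ (HKB (S n))). lra.
Qed.

Lemma uncond_sum_nonneg_plus (a b : X -> R) :
  uncond_sum_nonneg a -> uncond_sum_nonneg b -> uncond_sum_nonneg (fun x => a x + b x).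
Proof.
  assert (Hsplit : forall e, psum (fun x => a x + b x) e = (fun n => psum a e n + psum b e n))
    by (intros e; extensionality n; apply sum_plus).
  intros [[ra [Hra Ha]]|Ha] [[rb [Hrb Hb]]|Hb].
  - left. exists (ra + rb). split; [lra|]. intros e He. rewrite Hsplit. apply CV_plus; auto.
  - right. intros e He. rewrite Hsplit. apply cv_infty_plus_cv with ra; auto.
  - right. intros e He. rewrite Hsplit.
    replace (fun n => psum a e n + psum b e n) with (fun n => psum b e n + psum a e n)
      by (extensionality n; ring).
    apply cv_infty_plus_cv with rb; auto.
  - right. intros e He. rewrite Hsplit. apply cv_infty_plus; auto.
Qed.

Lemma uncond_sum_nonneg_perm (d : X -> R) (p : X -> X) :
  permutation p -> uncond_sum_nonneg d -> uncond_sum_nonneg (fun x => d (p x)).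
Proof.
  intros Hp [[r [Hr Hc]]|Hd]; [left; exists r; split; [exact Hr|] | right];
    intros e He; [exact (Hc _ (bij_compose p e Hp He)) | exact (Hd _ (bij_compose p e Hp He))].
Qed.

Lemma uncond_sum_nonneg_perm_iff (d : X -> R) (p : X -> X) :
  permutation p -> (uncond_sum_nonneg d <-> uncond_sum_nonneg (fun x => d (p x))).
Proof.
  intros Hp. split; [apply uncond_sum_nonneg_perm, Hp|].
  destruct Hp as [q [Hqp Hpq]]. intros H.
  replace d with (fun x => d (p (q x))) by (extensionality x; rewrite Hpq; reflexivity).
  apply (uncond_sum_nonneg_perm (fun x => d (p x))); [exists p; split|]; assumption.
Qed.

Lemma not_uncond_sum_nonneg_nonpos (d : X -> R) (e0 : nat -> X) x0 :
  bij e0 -> (forall x, d x <= 0) -> d x0 < 0 -> ~ uncond_sum_nonneg d.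
Proof.
  intros He0 Hneg Hx0. pose proof He0 as [g0 [_ Hg0]].
  assert (Hle : forall n, (g0 x0 <= n)%nat -> psum d e0 n <= d x0).
  { intros n Hn. rewrite psum_sum_below, <- (Hg0 x0).
    apply (sum_below_le_term (fun k => d (e0 k))); [intros; apply Hneg|lia]. }
  intros [[r [Hr Hc]]|Hd].
  - destruct (Hc e0 He0 (- d x0) ltac:(lra)) as [N HN].
    specialize (HN (Nat.max N (g0 x0)) ltac:(lia)). specialize (Hle (Nat.max N (g0 x0)) ltac:(lia)).
    unfold Rdist in HN; apply Rabs_def2 in HN. lra.
  - destruct (Hd e0 He0 (d x0)) as [N HN].
    specialize (HN (Nat.max N (g0 x0)) ltac:(lia)). specialize (Hle (Nat.max N (g0 x0)) ltac:(lia)).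
    lra.
Qed.

Lemma world_diff_indicator (w v : X -> R) :
  inW w -> inW v -> (fun x => w x - v x) = (fun x => ind (v x < w x) - ind (w x < v x)).
Proof.
  intros Hw Hv. extensionality x.
  unfold ind. destruct (Hw x), (Hv x), excluded_middle_informative, excluded_middle_informative;
    lra.
Qed.

Lemma sum_preorder_of_count_dominates (w v : X -> R) (e0 : nat -> X) :
  bij e0 -> inW w -> inW v ->
  count_dominates (fun k => v (e0 k) < w (e0 k)) (fun k => w (e0 k) < v (e0 k)) ->
  sum_preorder w v.
Proof.
  intros He0 Hw Hv Hdom. unfold sum_preorder.
  rewrite (world_diff_indicator w v Hw Hv).
  exact (uncond_sum_nonneg_indicator_diff _ _ e0 He0 Hdom).
Qed.

Lemma sum_preorder_of_pointwise_ge (w v : X -> R) (e0 : nat -> X) :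
  bij e0 -> inW w -> inW v -> (forall x, w x >= v x) -> sum_preorder w v.
Proof.
  intros He0 Hw Hv Hge. apply (sum_preorder_of_count_dominates w v e0 He0 Hw Hv).
  exists 0%nat. split; [|exists 0%nat; lia].
  intros N. rewrite count_below_empty; [lia|]. intros k. specialize (Hge (e0 k)). lra.
Qed.

Lemma sum_preorder_strong_pareto (e0 : nat -> X) :
  bij e0 -> strong_pareto (@sum_preorder X).
Proof.
  intros He0 w v Hw Hv Hge [x0 Hx0]. split.
  - exact (sum_preorder_of_pointwise_ge w v e0 He0 Hw Hv Hge).
  - apply (not_uncond_sum_nonneg_nonpos _ e0 x0 He0); [intros x; specialize (Hge x)|]; lra.
Qed.

Definition injective_on {T : Type} (A : T -> Prop) (f : T -> T) : Prop :=
  forall x y, A x -> A y -> f x = f y -> x = y.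

(* The [k]-th element of [A] (in the order of [e0]) is sent to the [(k+1)]-th element of [B],
   which exists by the failure of domination; the [0]-th element of [B] is then missed. *)
Lemma injection_of_not_count_dominates (A B : X -> Prop) (e0 : nat -> X) :
  bij e0 -> ~ count_dominates (fun k => A (e0 k)) (fun k => B (e0 k)) ->
  exists f : X -> X, (forall x, A x -> B (f x)) /\ injective_on A f /\
    exists b, B b /\ forall x, A x -> f x <> b.
Proof.
  intros [g0 [Hg1 Hg2]] Hndom.
  set (a := fun k => A (e0 k)). set (b := fun k => B (e0 k)).
  assert (Hexceed : forall K, (exists N, (K <= count_below a N)%nat) ->
                              exists m, b m /\ count_below b m = K).
  { intros K HK. apply count_below_attains.
    apply NNPP; intros C. apply Hndom. exists K. split; [|exact HK].
    intros N. apply Nat.nlt_ge. intros HN. apply C; eauto. }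
  set (rank_a := fun x => count_below a (g0 x)).
  set (pick := fun K => epsilon (inhabits 0%nat) (fun m => b m /\ count_below b m = K)).
  assert (Hpick : forall x, A x -> b (pick (S (rank_a x))) /\
                                   count_below b (pick (S (rank_a x))) = S (rank_a x)).
  { intros x Ax. apply epsilon_spec, Hexceed. exists (S (g0 x)). unfold rank_a; simpl.
    destruct excluded_middle_informative as [_|C]; [lia|]. exfalso; apply C.
    unfold a. rewrite Hg2. exact Ax. }
  destruct (Hexceed 0%nat) as [m0 [Hm0 Hrank0]]; [exists 0%nat; lia|].
  exists (fun x => e0 (pick (S (rank_a x)))). split; [|split].
  - intros x Ax. exact (proj1 (Hpick x Ax)).
  - intros x y Ax Ay E. apply (f_equal g0) in E. rewrite !Hg1 in E.
    destruct (Hpick x Ax) as [_ Rx], (Hpick y Ay) as [_ Ry].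
    assert (Egx : g0 x = g0 y).
    { apply (count_below_inj a); [unfold a; rewrite Hg2; exact Ax|unfold a; rewrite Hg2; exact Ay|].
      change (rank_a x = rank_a y). rewrite E in Rx. congruence. }
    rewrite <- (Hg2 x), Egx, Hg2. reflexivity.
  - exists (e0 m0). split; [exact Hm0|]. intros x Ax E.
    apply (f_equal g0) in E. rewrite !Hg1 in E.
    destruct (Hpick x Ax) as [_ Rx]. rewrite E in Rx. lia.
Qed.

End Enumerations.

Section Swap.

Variable T : Type.
Variable A : T -> Prop.
Variable f : T -> T.
Hypothesis f_out : forall x, A x -> ~ A (f x).
Hypothesis f_inj : injective_on A f.

Definition swap_image (x : T) : T :=
  if excluded_middle_informative (A x) then f x
  else if excluded_middle_informative (exists a, A a /\ f a = x)
       then epsilon (inhabits x) (fun a => A a /\ f a = x)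
       else x.

Lemma swap_image_in x : A x -> swap_image x = f x.
Proof. unfold swap_image; destruct excluded_middle_informative; tauto. Qed.

Lemma swap_image_image x : ~ A x -> (exists a, A a /\ f a = x) ->
  A (swap_image x) /\ f (swap_image x) = x.
Proof.
  intros nAx Hx. unfold swap_image.
  destruct excluded_middle_informative; [contradiction|].
  destruct excluded_middle_informative; [|contradiction].
  apply epsilon_spec, Hx.
Qed.

Lemma swap_image_fixed x : ~ A x -> (forall a, A a -> f a <> x) -> swap_image x = x.
Proof.
  intros nAx Hx. unfold swap_image.
  destruct excluded_middle_informative; [contradiction|].
  destruct excluded_middle_informative as [[a [Aa Ea]]|]; [destruct (Hx a Aa Ea)|reflexivity].
Qed.

Lemma swap_image_involutive x : swap_image (swap_image x) = x.
Proof.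
  destruct (classic (A x)) as [Ax|nAx].
  - rewrite (swap_image_in x Ax).
    destruct (swap_image_image (f x) (f_out x Ax) (ex_intro _ x (conj Ax eq_refl))) as [Ay Ey].
    exact (f_inj _ _ Ay Ax Ey).
  - destruct (classic (exists a, A a /\ f a = x)) as [Hx|Hx].
    + destruct (swap_image_image x nAx Hx) as [Ay Ey]. rewrite swap_image_in; assumption.
    + assert (Hfix : swap_image x = x) by (apply swap_image_fixed; eauto).
      rewrite !Hfix. reflexivity.
Qed.

Lemma swap_image_permutation : permutation swap_image.
Proof. exists swap_image. split; apply swap_image_involutive. Qed.

End Swap.

Lemma not_ge_of_permuted_pareto {X : Type} (ge : rel X) (w v : X -> R) (p : X -> X) (b : X) :
  preorder_on_W ge -> strong_pareto ge -> permutation_invariance ge ->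
  inW w -> inW v -> permutation p ->
  (forall x, w (p x) <= v x /\ w x <= v (p x)) -> w (p b) < v b -> w b < v (p b) ->
  ~ ge w v.
Proof.
  intros [_ Htrans] HP HPI Hw Hv Hp Hpw Hb1 Hb2 Hge.
  assert (Hwp : inW (permw p w)) by (intros x; apply Hw).
  assert (Hvp : inW (permw p v)) by (intros x; apply Hv).
  assert (Hpermuted : ge (permw p w) (permw p v)) by (apply HPI; assumption).
  assert (Hv_over : strict ge v (permw p w)).
  { apply HP; [assumption.. | intros x; apply Rle_ge, Hpw | exists b; exact Hb1]. }
  assert (Hw_under : strict ge (permw p v) w).
  { apply HP; [assumption.. | intros x; apply Rle_ge, Hpw | exists b; exact Hb2]. }
  apply (proj2 Hv_over). apply (Htrans _ w); [assumption.. | |exact Hge].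
  apply (Htrans _ (permw p v)); [assumption.. | exact Hpermuted | exact (proj1 Hw_under)].
Qed.

Lemma sum_preorder_largest {X : Type} (e0 : nat -> X) (ge : rel X) :
  bij e0 -> preorder_on_W ge -> strong_pareto ge -> permutation_invariance ge ->
  forall w v, inW w -> inW v -> ge w v -> sum_preorder w v.
Proof.
  intros He0 Hpre HP HPI w v Hw Hv Hge.
  set (A := fun x => v x < w x). set (B := fun x => w x < v x).
  destruct (classic (count_dominates (fun k => A (e0 k)) (fun k => B (e0 k)))) as [Hdom|Hndom].
  { exact (sum_preorder_of_count_dominates X w v e0 He0 Hw Hv Hdom). }
  exfalso.
  destruct (injection_of_not_count_dominates X A B e0 He0 Hndom)
    as [f [HfAB [Hfinj [b [Bb Hbf]]]]].
  assert (HAB : forall x, A x -> ~ B x) by (unfold A, B; intros x; lra).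
  assert (f_out : forall x, A x -> ~ A (f x)) by (intros x Ax Afx; exact (HAB _ Afx (HfAB x Ax))).
  set (p := swap_image X A f).
  assert (Hfixed : forall x, ~ A x -> ~ B x -> p x = x).
  { intros x nA nB. apply swap_image_fixed; [exact nA|]. intros a Aa <-. exact (nB (HfAB a Aa)). }
  assert (Hpb : p b = b).
  { apply swap_image_fixed; [intros Ab; exact (HAB b Ab Bb)|exact Hbf]. }
  apply (not_ge_of_permuted_pareto ge w v p b Hpre HP HPI Hw Hv
           (swap_image_permutation X A f f_out Hfinj)); [| rewrite Hpb; exact Bb | rewrite Hpb; exact Bb | exact Hge].
  intros x. destruct (classic (A x)) as [Ax|nA]; [|destruct (classic (B x)) as [Bx|nB]].
  - unfold p. rewrite swap_image_in by exact Ax. pose proof (HfAB x Ax) as Bfx.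
    unfold A, B in *. destruct (Hw x), (Hv x), (Hw (f x)), (Hv (f x)); lra.
  - unfold B in Bx. destruct (Hw x), (Hv x), (Hw (p x)), (Hv (p x)); lra.
  - rewrite (Hfixed x nA nB). unfold A, B in *. lra.
Qed.

Theorem proposition2 (X : Type) (hX : countably_infinite X) :
  (preorder_on_W (@sum_preorder X) /\ strong_pareto (@sum_preorder X) /\ permutation_invariance (@sum_preorder X))
  /\
  (forall ge : rel X,
     preorder_on_W ge -> strong_pareto ge -> permutation_invariance ge ->
     forall w v, inW w -> inW v -> ge w v -> sum_preorder w v).
Proof.
  destruct hX as [e0 He0].
  split; [split; [split|split]|].
  - intros w Hw. apply (sum_preorder_of_pointwise_ge X w w e0 He0 Hw Hw). intros x; lra.
  - intros u v w _ _ _ Huv Hvw. unfold sum_preorder.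
    replace (fun x => u x - w x) with (fun x => (u x - v x) + (v x - w x))
      by (extensionality x; ring).
    exact (uncond_sum_nonneg_plus X _ _ Huv Hvw).
  - exact (sum_preorder_strong_pareto X e0 He0).
  - intros w v _ _ p Hp. exact (uncond_sum_nonneg_perm_iff X (fun x => w x - v x) p Hp).
  - intros ge Hpre HP HPI. exact (sum_preorder_largest e0 ge He0 Hpre HP HPI).
Qed.
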